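(* Let $\mathcal T$ be a text, let $u=\mathrm{locus}(\alpha)$ be an explicit node of its suffix tree, and let $\mathtt{st\text{-}lex}[b,e]$ be the range containing the text positions $j\in\mathtt{st\text{-}lex}$ such that $\mathcal T[1,j]$ is suffixed by $\alpha$. Then all (and only) the letters labeling the outgoing edges from node $u$ appear in $\mathcal L[b,e]\setminus\{\#\}$, that is, $\mathrm{out}(u)=\{c: c\in\mathcal L[b,e]\wedge c\ne\#\}$.
   Context: A text is a string $\mathcal T\in\Sigma^n$ over an integer alphabet whose last symbol $\mathcal T[n]=\$$ occurs only there and is smallest. $\mathrm{locus}(\alpha)$ is the suffix tree node whose root-to-node path label is $\alpha$; $\mathrm{out}(u)$ is the set of first characters of the labels of the outgoing edges of $u$. $\mathrm{ISA}[i]$ is the lexicographic rank of suffix $\mathcal T[i,n]$. For $i\ne j$, $\mathrm{rlce}(i,j)$ is the length of the longest common prefix of $\mathcal T[i,n]$ and $\mathcal T[j,n]$. For a permutation $\pi$, $\mathrm{LPF}_\pi[i]=0$ if $\pi(i)=1$, else $\mathrm{LPF}_\pi[i]=\max_{\pi(j)<\pi(i)}\mathrm{rlce}(j,i)$, and $\mathrm{PDA}_\pi=\{i+\mathrm{LPF}_\pi[i]:i\in[n]\}$. Let $\mathtt{st\text{-}lex}^-=\mathrm{PDA}_\pi$ for $\pi(i)=\mathrm{ISA}[i]$ and $\mathtt{st\text{-}lex}^+=\mathrm{PDA}_{\bar\pi}$ for $\bar\pi(i)=n-\mathrm{ISA}[i]+1$. The array $\mathtt{st\text{-}lex}$ lists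 the set $\{i-1: i\in\mathtt{st\text{-}lex}^-\cup\mathtt{st\text{-}lex}^+\cup\{n+1\}\}$ sorted colexicographically by the prefixes $\mathcal T[1,j]$ ($\mathcal T[1,0]$ being empty). With $\#\notin\Sigma$ a new symbol, $\mathcal L$ is the string of length $|\mathtt{st\text{-}lex}|$ with $\mathcal L[i]=\#$ if $\mathtt{st\text{-}lex}[i]=n$ and $\mathcal L[i]=\mathcal T[\mathtt{st\text{-}lex}[i]+1]$ otherwise. *)

(* Texts are sequences of naturals (integer alphabet).
   Positions are 1-indexed as in the paper unless stated otherwise. *)
From mathcomp Require Import all_boot.
Set Implicit Arguments. Unset Strict Implicit. Unset Printing Implicit Defensive.

Definition is_text (T : seq nat) : Prop :=
  0 < size T /\ forall k, k < (size T).-1 -> last 0 T < nth 0 T k.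

Fixpoint lex_le (s t : seq nat) : bool :=
  match s, t with
  | [::], _ => true
  | _ :: _, [::] => false
  | a :: s', b :: t' => (a < b) || ((a == b) && lex_le s' t')
  end.

Definition colex_le (s t : seq nat) : bool := lex_le (rev s) (rev t).

Fixpoint lcp (s t : seq nat) : nat :=
  match s, t with
  | a :: s', b :: t' => if a == b then (lcp s' t').+1 else 0
  | _, _ => 0
  end.

Section Text.
Variable T : seq nat.
Local Notation n := (size T).

(* suffix T[i,n], 1-indexed i *)
Definition sufT (i : nat) : seq nat := drop i.-1 T.

Definition ISA (i : nat) : nat :=
  count (fun j => lex_le (sufT j) (sufT i)) (iota 1 n).

Definition rlce (i j : nat) : nat := lcp (sufT i) (sufT j).

Definition LPF (pi : nat -> nat) (i : nat) : nat :=
  if pi i == 1 then 0 else \max_(j <- iota 1 n | pi j < pi i) rlce j i.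

(* PDA_pi as a sequence of values (set semantics) *)
Definition PDA (pi : nat -> nat) : seq nat := [seq i + LPF pi i | i <- iota 1 n].

Definition pi_minus (i : nat) : nat := ISA i.
Definition pi_plus (i : nat) : nat := n - ISA i + 1.

Definition st_lex_minus : seq nat := PDA pi_minus.
Definition st_lex_plus : seq nat := PDA pi_plus.

(* st-lex: the set {i-1 : i in st-lex^- U st-lex^+ U {n+1}}, sorted
   colexicographically by the prefixes T[1,j]; stored 0-indexed. *)
Definition st_lex : seq nat :=
  sort (fun j j' => colex_le (take j T) (take j' T))
       (undup [seq i.-1 | i <- st_lex_minus ++ st_lex_plus ++ [:: n.+1]]).

(* L: None encodes #; L[i] = T[st_lex[i]+1] (1-indexed) = nth 0 T st_lex[i]. *)
Definition Lseq : seq (option nat) :=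
  [seq (if j == n then None else Some (nth 0 T j)) | j <- st_lex].

(* The node locus(alpha)
   is explicit iff alpha is the root, a branching node (alpha is followed in
   the trie by two distinct letters) or a leaf (alpha is a suffix of T). *)
Definition trie_child (alpha : seq nat) (c : nat) : Prop :=
  exists i, prefix (rcons alpha c) (drop i T).

Definition explicit_node (alpha : seq nat) : Prop :=
  alpha = [::] \/
  (exists c1 c2, c1 <> c2 /\ trie_child alpha c1 /\ trie_child alpha c2) \/
  (alpha <> [::] /\ suffix alpha T).

(* out(locus alpha): first letters of the labels of outgoing edges *)
Definition out (alpha : seq nat) : nat -> Prop := trie_child alpha.

End Text.

From mathcomp Require Import all_boot zify.

(* If L[x] = c for x in the range, then c = T[j+1] for j = st-lex[x], where
   T[1,j] ends with alpha, so alpha c occurs in T.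
   Conversely, let alpha c occur.  If alpha were a nonempty suffix of T it
   would end with $, which occurs only at the end of T; hence alpha is the
   root or a branching node, and alpha d occurs for some d <> c.  Take the
   occurrence i of alpha c that comes first in the order pi (= ISA when alpha
   is empty or d < c, reversed ISA when d > c).  No suffix before i in pi
   starts with alpha c, but the occurrence of alpha d does precede i and
   shares alpha with it, so LPF_pi[i] = |alpha|.  Hence i + |alpha| lies in
   the PDA, so j = i + |alpha| - 1 is in st-lex, T[1,j] ends with alpha and
   T[j+1] = c. *)

Set Implicit Arguments.
Unset Strict Implicit.
Unset Printing Implicit Defensive.

Lemma lex_le_refl s : lex_le s s.
Proof. by elim: s => //= a s ->; rewrite eqxx orbT. Qed.

Lemma lex_le_trans s t u : lex_le s t -> lex_le t u -> lex_le s u.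
Proof.
elim: s t u => [|a s IH] [|b t] [|c u] //=.
move=> /orP[ab|/andP[/eqP ab st]] /orP[bc|/andP[/eqP bc tu]].
- by rewrite (ltn_trans ab bc).
- by rewrite -bc ab.
- by rewrite ab bc.
- by rewrite ab bc eqxx (IH _ _ st tu) orbT.
Qed.

Lemma lex_le_cat a s t : lex_le (a ++ s) (a ++ t) = lex_le s t.
Proof. by elim: a => //= x a ->; rewrite ltnn eqxx. Qed.

Lemma lex_lt_cat_cons a x y s t : x < y ->
  lex_le (a ++ x :: s) (a ++ y :: t) && ~~ lex_le (a ++ y :: t) (a ++ x :: s).
Proof. by move=> xy; rewrite !lex_le_cat /= xy ltnNge (ltnW xy) (gtn_eqF xy). Qed.

Lemma count_lt_sub (X : eqType) (P Q : pred X) s x :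
  subpred P Q -> x \in s -> Q x -> ~~ P x -> count P s < count Q s.
Proof.
move=> PQ; elim: s => //= y s IH; rewrite inE => /orP[/eqP<-|xs] Qx nPx.
  by rewrite Qx (negbTE nPx) add0n add1n ltnS sub_count.
have PQy : P y <= Q y by case: (P y) (PQ y) => // ->.
by rewrite -addnS leq_add ?IH.
Qed.

Lemma seq_argmin (X : eqType) (P : pred X) (f : X -> nat) s :
  has P s -> exists2 x, x \in s & P x /\ forall y, y \in s -> P y -> f x <= f y.
Proof.
move=> hasP_s.
have exm : exists m, has (fun x => P x && (f x == m)) s.
  by case/hasP: hasP_s => x xs Px; exists (f x); apply/hasP; exists x; rewrite ?Px ?eqxx.
case: (ex_minnP exm) => m /hasP[x xs /andP[Px /eqP fx]] mmin.
exists x => //; split=> // y ys Py; rewrite fx; apply: mmin.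
by apply/hasP; exists y; rewrite ?Py ?eqxx.
Qed.

Lemma lcp_le_size s t : lcp s t <= size t.
Proof. by elim: s t => [|x s IH] [|y t] //=; case: eqP => // _; rewrite ltnS. Qed.

Lemma prefix_size_le_lcp a s t : prefix a s -> prefix a t -> size a <= lcp s t.
Proof.
elim: a s t => [|x a IH] [|y s] [|z t] //=.
by move=> /andP[/eqP<- ps] /andP[/eqP<- pt]; rewrite eqxx ltnS IH.
Qed.

Lemma lcp_prefix u s t : prefix u t -> size u <= lcp s t -> prefix u s.
Proof.
elim: u s t => [|x u IH] [|y s] [|z t] //= /andP[/eqP<- pt].
by case: eqP => // ->; rewrite ltnS eqxx => /(IH _ _ pt).
Qed.

Section Text.
Variable T : seq nat.
Local Notation n := (size T).

Lemma trie_childP w c :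
  trie_child T w c <-> exists2 i, i \in iota 1 n & prefix (rcons w c) (sufT T i).
Proof.
split=> [[i pi]|[[|i] _ pi]]; last by exists i.
  exists i.+1 => //; rewrite mem_iota ltn0Sn add1n ltnS -subn_gt0 -size_drop.
  by apply: leq_trans (size_prefix pi); rewrite size_rcons.
by exists 0; rewrite /sufT /= in pi.
Qed.

Lemma ISA_le i : ISA T i <= n.
Proof. by rewrite /ISA (leq_trans (count_size _ _)) ?size_iota. Qed.

Lemma ISA_gt0 i : i \in iota 1 n -> 0 < ISA T i.
Proof. by move=> iin; rewrite /ISA -has_count; apply/hasP; exists i; rewrite ?lex_le_refl. Qed.

Lemma ISA_lt j i : i \in iota 1 n ->
  lex_le (sufT T j) (sufT T i) -> ~~ lex_le (sufT T i) (sufT T j) ->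
  ISA T j < ISA T i.
Proof.
move=> iin ji nij; apply: (count_lt_sub _ iin) => //; last exact: lex_le_refl.
by move=> y /lex_le_trans; apply.
Qed.

Lemma ISA_lt_rcons w d c j i : d < c -> i \in iota 1 n ->
  prefix (rcons w d) (sufT T j) -> prefix (rcons w c) (sufT T i) ->
  ISA T j < ISA T i.
Proof.
move=> dc iin /prefixP[s sj] /prefixP[t si].
have /andP[le nge] := lex_lt_cat_cons w s t dc.
by apply: ISA_lt iin _ _; rewrite sj si !cat_rcons.
Qed.

Lemma LPF_le pi i : i \in iota 1 n -> i + LPF T pi i <= n.+1.
Proof.
rewrite mem_iota => /andP[i1 i2]; rewrite /LPF; case: ifP => _; first lia.
have : \max_(j <- iota 1 n | pi j < pi i) rlce T j i <= n - i.-1.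
  apply/bigmax_leqP_seq => j _ _.
  by rewrite /rlce (leq_trans (lcp_le_size _ _)) // size_drop.
lia.
Qed.

Lemma st_lex_le j : j \in st_lex T -> j <= n.
Proof.
rewrite mem_sort mem_undup => /mapP[v]; rewrite !mem_cat => + ->.
case/or3P => [/mapP[i iin ->]|/mapP[i iin ->]|/[!inE]/eqP-> //].
  by have := LPF_le (pi_minus T) iin; lia.
by have := LPF_le (pi_plus T) iin; lia.
Qed.

Lemma PDA_minus_st_lex x : x \in PDA T (pi_minus T) -> x.-1 \in st_lex T.
Proof. by move=> xin; rewrite mem_sort mem_undup map_f // mem_cat xin. Qed.

Lemma PDA_plus_st_lex x : x \in PDA T (pi_plus T) -> x.-1 \in st_lex T.
Proof. by move=> xin; rewrite mem_sort mem_undup map_f // !mem_cat xin orbT. Qed.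

Lemma LPF_min_occurrence pi w c i :
  i \in iota 1 n -> prefix (rcons w c) (sufT T i) ->
  (forall k, k \in iota 1 n -> prefix (rcons w c) (sufT T k) -> pi i <= pi k) ->
  w = [::] \/ (exists2 k, k \in iota 1 n & 0 < pi k < pi i /\ prefix w (sufT T k)) ->
  LPF T pi i = size w.
Proof.
move=> iin pwc imin C.
have pw : prefix w (sufT T i) by apply: prefix_trans pwc; apply: prefix_rcons.
rewrite /LPF; case: eqP => [pi1|_].
  by case: C => [->//|[k _ [/andP[k0 ki] _]]]; lia.
apply/eqP; rewrite eqn_leq; apply/andP; split.
  apply/bigmax_leqP_seq => k kin ki; rewrite leqNgt; apply/negP => lt.
  have pk : prefix (rcons w c) (sufT T k) by apply: lcp_prefix pwc _; rewrite size_rcons.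
  by have := imin k kin pk; rewrite leqNgt ki.
case: C => [->//|[k kin [/andP[_ ki] pk]]].
exact: bigmaxn_sup_seq kin ki (prefix_size_le_lcp pk pw).
Qed.

Lemma prefix_sufT_rcons w c i : 0 < i -> prefix (rcons w c) (sufT T i) ->
  [/\ i.-1 + size w < n, suffix w (take (i.-1 + size w) T)
    & nth 0 T (i.-1 + size w) = c].
Proof.
rewrite /sufT => i_gt0 /prefixP[s si]; rewrite -cats1 -catA /= in si.
have dj : drop (i.-1 + size w) T = c :: s by rewrite addnC -drop_drop si drop_size_cat.
split.
- by rewrite -subn_gt0 -size_drop dj.
- by rewrite takeD si take_size_cat // suffix_suffix.
- by rewrite -[_ + _]addn0 -nth_drop dj.
Qed.

Lemma nth_Lseq_index j : j \in st_lex T -> j < n ->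
  nth None (Lseq T) (index j (st_lex T)) = Some (nth 0 T j).
Proof. by move=> jin jn; rewrite (nth_map 0) ?index_mem // nth_index // ltn_eqF. Qed.

Lemma child_of_Lseq w c x :
  x < size (st_lex T) -> suffix w (take (nth 0 (st_lex T) x) T) ->
  nth None (Lseq T) x = Some c -> trie_child T w c.
Proof.
move=> xs /suffixP[s tj]; rewrite (nth_map 0) //.
set j := nth 0 (st_lex T) x in tj *.
have jle : j <= n by apply: st_lex_le; apply: mem_nth.
case: eqP => // jn [<-]; have jlt : j < n by rewrite ltn_neqAle jle andbT; apply/eqP.
exists (size s); apply/prefixP; exists (drop j.+1 T).
rewrite -{1}(cat_take_drop j T) tj -catA drop_size_cat // (drop_nth 0 jlt).
by rewrite cat_rcons.
Qed.

Definition occ_before (pi : nat -> nat) (w : seq nat) (c k : nat) : Prop :=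
  [/\ k \in iota 1 n, 0 < pi k, prefix w (sufT T k)
    & forall i, i \in iota 1 n -> prefix (rcons w c) (sufT T i) -> pi k < pi i].

Lemma Lseq_of_child_before pi w c :
  (forall x, x \in PDA T pi -> x.-1 \in st_lex T) ->
  trie_child T w c -> w = [::] \/ (exists k, occ_before pi w c k) ->
  exists2 x, x < size (st_lex T) /\ suffix w (take (nth 0 (st_lex T) x) T)
    & nth None (Lseq T) x = Some c.
Proof.
move=> PDA_st_lex /trie_childP[i0 i0in p0] C.
have occ : has (fun i => prefix (rcons w c) (sufT T i)) (iota 1 n).
  by apply/hasP; exists i0.
have [i iin [pwc imin]] := seq_argmin pi occ.
have LPFi : LPF T pi i = size w.
  apply: (LPF_min_occurrence iin pwc imin).
  case: C => [->|[k [kin k0 pk kmin]]]; first by left.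
  by right; exists k; rewrite ?k0 ?(kmin i iin pwc).
have i_gt0 : 0 < i by move: iin; rewrite mem_iota => /andP[].
have [jn sw cj] := prefix_sufT_rcons i_gt0 pwc.
have jin : i.-1 + size w \in st_lex T.
  have := PDA_st_lex _ (map_f (fun i => i + LPF T pi i) iin).
  by rewrite LPFi (_ : (i + size w).-1 = i.-1 + size w) //; lia.
exists (index (i.-1 + size w) (st_lex T)); first by rewrite index_mem nth_index.
by rewrite nth_Lseq_index // cj.
Qed.

Lemma occ_before_minus w d c : d < c -> trie_child T w d ->
  exists k, occ_before (pi_minus T) w c k.
Proof.
move=> dc /trie_childP[k kin pk]; exists k; split=> //.
- exact: ISA_gt0.
- by apply: prefix_trans pk; apply: prefix_rcons.
- by move=> i iin pi; apply: ISA_lt_rcons dc iin pk pi.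
Qed.

Lemma occ_before_plus w d c : c < d -> trie_child T w d ->
  exists k, occ_before (pi_plus T) w c k.
Proof.
move=> cd /trie_childP[k kin pk]; exists k; split=> //.
- by rewrite /pi_plus addn1.
- by apply: prefix_trans pk; apply: prefix_rcons.
- move=> i iin pi; have := ISA_lt_rcons cd kin pi pk.
  by rewrite /pi_plus; have := ISA_le k; lia.
Qed.

Lemma suffix_text_no_child w c :
  is_text T -> w != [::] -> suffix w T -> ~ trie_child T w c.
Proof.
move=> [_ txt] + /suffixP[s Ts] /trie_childP[i iin pwc].
case/lastP: w Ts pwc => [|w a] Ts pwc // _.
have i_gt0 : 0 < i by move: iin; rewrite mem_iota => /andP[].
have [jn /suffixP[s' tj] _] := prefix_sufT_rcons i_gt0 pwc.
set j := i.-1 + size (rcons w a) in jn tj.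
have j0 : 0 < j by rewrite /j size_rcons addnS.
have ja : nth 0 T j.-1 = a.
  have := nth_last 0 (take j T).
  by rewrite size_takel ?(ltnW jn) // nth_take ?ltn_predL // tj last_cat last_rcons.
have lastT : last 0 T = a by rewrite Ts last_cat last_rcons.
have : j.-1 < n.-1 by lia.
by move/txt; rewrite ja lastT ltnn.
Qed.

Lemma Lseq_of_explicit_child w c : is_text T -> explicit_node T w ->
  trie_child T w c ->
  exists2 x, x < size (st_lex T) /\ suffix w (take (nth 0 (st_lex T) x) T)
    & nth None (Lseq T) x = Some c.
Proof.
move=> text [root|[[c1 [c2 [c12 [ch1 ch2]]]]|[w0 sw]]] wc.
- by apply: (Lseq_of_child_before (@PDA_minus_st_lex) wc); left.
- have [d dc chd] : exists2 d, d != c & trie_child T w d.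
    case: (eqVneq c1 c) => [<-|c1c]; last by exists c1.
    by exists c2 => //; apply/eqP => /esym.
  case: (ltngtP d c) dc => // [dc|cd] _.
    apply: (Lseq_of_child_before (@PDA_minus_st_lex) wc); right.
    exact: occ_before_minus dc chd.
  apply: (Lseq_of_child_before (@PDA_plus_st_lex) wc); right.
  exact: occ_before_plus cd chd.
- by case: (suffix_text_no_child text (introN eqP w0) sw wc).
Qed.

End Text.

Theorem corollary25 (T : seq nat) (alpha : seq nat) (b e : nat) :
  is_text T ->
  explicit_node T alpha ->
  (forall i, (b <= i <= e) <->
             (i < size (st_lex T) /\ suffix alpha (take (nth 0 (st_lex T) i) T))) ->
  forall c : nat,
    out T alpha c <-> exists2 i, b <= i <= e & nth None (Lseq T) i = Some c.
Proof.
move=> text expl rng c; split.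
  by case/(Lseq_of_explicit_child text expl) => x /rng; exists x.
by case=> x /rng[xs sw]; apply: child_of_Lseq.
Qed.
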